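(* Assume CH. Let $\mathcal{I}$ and $\mathcal{J}$ be ideals such that $\mathcal{I}\subseteq\mathcal{I}'$ for some hereditary weak P-ideal $\mathcal{I}'$ with $\mathcal{J}\not\leq_K\mathcal{I}'$. Then there is a Mr\'owka space in $\mathrm{FinBW}(\mathcal{I})\setminus\mathrm{FinBW}(\mathcal{J})$.
   Context: An ideal on an infinite countable set $X$ is a family $\mathcal{I}\subseteq\mathcal{P}(X)$ closed under subsets and finite unions, containing all finite subsets, with $X\notin\mathcal{I}$. $\mathcal{I}|A=\{B\cap A:B\in\mathcal{I}\}$. A space $X$ is in $\mathrm{FinBW}(\mathcal{I})$ if $X$ is Hausdorff and for every sequence $(x_n)_{n\in\bigcup\mathcal{I}}$ in $X$ there is $A\notin\mathcal{I}$ with $(x_n)_{n\in A}$ convergent in $X$. $\mathcal{J}\leq_K\mathcal{I}$: there is a function $f:\bigcup\mathcal{I}\to\bigcup\mathcal{J}$ with $f^{-1}[B]\in\mathcal{I}$ for all $B\in\mathcal{J}$. $\mathrm{Fin}^2$: ideal on $\omega^2$ of all $A$ with only finitely many $n$ such that $\{m:(n,m)\in A\}$ is infinite. $\mathcal{I}\sqsubseteq\mathcal{J}$: there is a bijection $f:\bigcup\mathcal{J}\to\bigcup\mathcal{I}$ with $f^{-1}[A]\in\mathcal{J}$ for all $A\in\mathcal{I}$. $\mathcal{I}$ is a hereditary weak P-ideal if $\mathrm{Fin}^2\not\sqsubseteq\mathcal{I}|A$ for every $A\notin\mathcal{I}$. A Mr\'owka space is $\Phi(\mathcal{A})$ for an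 infinite almost disjoint family $\mathcal{A}$ of infinite subsets of $\omega$: underlying set $\omega\cup\mathcal{A}\cup\{\infty\}$, points of $\omega$ isolated, basic neighbourhoods of $A\in\mathcal{A}$ are $\{A\}\cup(A\setminus F)$ ($F\subseteq\omega$ finite), of $\infty$ are $\{\infty\}\cup(\mathcal{A}\setminus G)\cup(\omega\setminus(F\cup\bigcup G))$ ($F\subseteq\omega$, $G\subseteq\mathcal{A}$ finite). *)

From HB Require Import structures.
From mathcomp Require Import all_boot all_order.
From mathcomp Require Import boolp classical_sets functions cardinality topology.

Set Implicit Arguments.
Unset Strict Implicit.
Unset Printing Implicit Defensive.

Local Open Scope classical_set_scope.

Definition CH : Prop :=
  forall S : set (set nat), countable S \/ (S #= [set: set nat])%card.

(** An ideal is represented by the family [I : set (set T)]; its underlying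
    set X is [\bigcup I] (as in the paper, X = \bigcup I). *)
Definition supp {T : Type} (I : set (set T)) : set T := \bigcup_(B in I) B.

Definition is_ideal {T : Type} (I : set (set T)) : Prop :=
  [/\ countable (supp I), infinite_set (supp I),
      (forall A B : set T, I B -> A `<=` B -> I A) /\
      (forall A B : set T, I A -> I B -> I (A `|` B)),
      (forall F : set T, F `<=` supp I -> finite_set F -> I F) &
      ~ I (supp I)].

Definition restr {T : Type} (I : set (set T)) (A : set T) : set (set T) :=
  [set B `&` A | B in I].

Definition katetov_le {T U : Type} (J : set (set U)) (I : set (set T)) : Prop :=
  exists f : T -> U, set_fun (supp I) (supp J) f /\
    forall B : set U, J B -> I (supp I `&` f @^-1` B).

Definition ideal_sqsubseteq {T U : Type} (I : set (set T)) (J : set (set U)) : Prop :=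
  exists f : U -> T, set_bij (supp J) (supp I) f /\
    forall A : set T, I A -> J (supp J `&` f @^-1` A).

Definition Fin2 : set (set (nat * nat)) :=
  [set A | finite_set [set n | infinite_set [set m | A (n, m)]]].

Definition hereditary_weakP {T : Type} (I : set (set T)) : Prop :=
  forall A : set T, A `<=` supp I -> ~ I A -> ~ ideal_sqsubseteq Fin2 (restr I A).

Definition conv_on {T : Type} {X : topologicalType} (x : T -> X) (A : set T) (p : X) : Prop :=
  forall U : set X, nbhs p U -> finite_set [set n | A n /\ ~ U (x n)].

Definition FinBW {T : Type} (I : set (set T)) (X : topologicalType) : Prop :=
  hausdorff_space X /\
  forall x : T -> X, exists A : set T,
    [/\ A `<=` supp I, ~ I A & exists p : X, conv_on x A p].

Definition almost_disjoint_family (AA : set (set nat)) : Prop :=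
  [/\ infinite_set AA,
      (forall A : set nat, AA A -> infinite_set A) &
      (forall A B : set nat, AA A -> AA B -> A <> B -> finite_set (A `&` B))].

(** Underlying set omega ∪ AA ∪ {oo}: [None] is oo, [Some (inl a)] is the
    point a ∈ AA, [Some (inr n)] is n ∈ omega. *)
Definition mrowka (AA : set (set nat)) : Type := option (AA + nat).

HB.instance Definition _ (AA : set (set nat)) := Choice.on (mrowka AA).
HB.instance Definition _ (AA : set (set nat)) :=
  isPointed.Build (mrowka AA) None.

Definition pt_nat {AA : set (set nat)} (n : nat) : mrowka AA := Some (inr n).
Definition pt_set {AA : set (set nat)} (a : AA) : mrowka AA := Some (inl a).

Definition mrowka_basic (AA : set (set nat)) : set (set (mrowka AA)) :=
  [set U | (exists n : nat, U = [set pt_nat n])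
        \/ (exists (a : AA) (F : set nat), finite_set F /\
              U = [set pt_set a] `|` [set pt_nat n | n in (val a `\` F)])
        \/ (exists (F : set nat) (G : set AA), finite_set F /\ finite_set G /\
              U = [set None] `|` [set pt_set a | a in ~` G]
                  `|` [set pt_nat n | n in ~` (F `|` \bigcup_(a in G) val a)])].

Arguments mrowka_basic : clear implicits.

HB.instance Definition _ (AA : set (set nat)) :=
  isSubBaseTopological.Build (mrowka AA) (I := set (mrowka AA)) (mrowka_basic AA) id.

(* Copy I' and J to ideals I0 and J0 on nat along enumerations of their
   supports.  Under CH all subsets E of nat and all maps g : nat -> nat can be
   listed in an order of type omega_1, and a recursion along this list builds
   an almost disjoint family AA of sets in J0 such that
   - every J0-positive E meets some a in AA in an infinite set, and
   - every g with fibres in I0 maps some I0-positive D with finite fibres into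
     some a in AA.
   The steps for E use that J0 is not below I0 in the Katetov order; the steps
   for g use the hereditary weak P-property of I0: an I0-positive set can be
   shrunk to an I0-positive set with finite fibres under any map whose fibres
   are in I0.  In Phi(AA) a sequence indexed by nat then has an I0-positive
   subsequence that is constant, converges to infinity, or (via the second
   property) converges to a point of AA.  The sequence n |-> n has no
   J0-positive convergent subsequence: a limit in nat or AA forces the indices
   into a set of J0, and a limit at infinity contradicts the first property. *)

From mathcomp Require Import all_boot all_order finmap.
From mathcomp Require Import boolp classical_sets functions cardinality topology wochoice.

Set Implicit Arguments.
Unset Strict Implicit.
Unset Printing Implicit Defensive.

Local Open Scope classical_set_scope.

Definition nat_ideal (K : set (set nat)) : Prop :=
  [/\ forall A B, K B -> A `<=` B -> K A,
      forall A B, K A -> K B -> K (A `|` B) &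
      forall F, finite_set F -> K F].

Section NatIdeal.
Variable K : set (set nat).
Hypothesis K_ideal : nat_ideal K.

Lemma nat_idealS A B : K B -> A `<=` B -> K A.
Proof. by case: K_ideal => + _ _; apply. Qed.

Lemma nat_idealU A B : K A -> K B -> K (A `|` B).
Proof. by case: K_ideal => _ + _; apply. Qed.

Lemma nat_ideal_finite F : finite_set F -> K F.
Proof. by case: K_ideal => _ _; apply. Qed.

Lemma nat_idealSU A B C : K B -> K C -> A `<=` B `|` C -> K A.
Proof. by move=> KB KC; apply: nat_idealS; exact: nat_idealU. Qed.

Lemma nat_ideal0 : K set0.
Proof. exact/nat_ideal_finite/finite_set0. Qed.

Lemma nat_ideal_bigcup {I : choiceType} (D : set I) (F : I -> set nat) :
  finite_set D -> (forall i, D i -> K (F i)) -> K (\bigcup_(i in D) F i).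
Proof.
move=> /finite_fsetP[X ->]; elim/fset1U_rect: X => [|i X _ IH] KF.
  by rewrite set_fset0 bigcup_set0; exact: nat_ideal0.
rewrite set_fsetU1 bigcup_setU1 in KF *; apply: nat_idealU.
  by apply: KF; left.
by apply: IH => j Xj; apply: KF; right.
Qed.

End NatIdeal.

Lemma conv_on_cst {T : Type} {X : topologicalType} (x : T -> X) (A : set T) (p : X) :
  (forall n, A n -> x n = p) -> conv_on x A p.
Proof.
move=> xA U /nbhs_singleton Up; rewrite (_ : [set _ | _] = set0) ?finite_set0 //.
by apply/seteqP; split=> // n [/xA -> []].
Qed.

Section Mrowka.
Variable AA : set (set nat).
Implicit Types (a b : AA) (F : set nat) (G : set AA) (p q : mrowka AA) (S : set (mrowka AA)).

Definition mrowka_nbhs_set a F : set (mrowka AA) :=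
  [set pt_set a] `|` [set pt_nat n | n in val a `\` F].

Definition mrowka_nbhs_infty F G : set (mrowka AA) :=
  [set None] `|` [set pt_set a | a in ~` G]
  `|` [set pt_nat n | n in ~` (F `|` \bigcup_(a in G) val a)].

Lemma mrowka_basic_nat n : mrowka_basic AA [set pt_nat n].
Proof. by left; exists n. Qed.

Lemma mrowka_basic_set a F : finite_set F -> mrowka_basic AA (mrowka_nbhs_set a F).
Proof. by move=> fF; right; left; exists a, F. Qed.

Lemma mrowka_basic_infty F G :
  finite_set F -> finite_set G -> mrowka_basic AA (mrowka_nbhs_infty F G).
Proof. by move=> fF fG; right; right; exists F, G. Qed.

Lemma nbhs_mrowka_basic S p : mrowka_basic AA S -> S p -> nbhs p S.
Proof.
move=> bS Sp; apply: open_nbhs_nbhs; split=> //.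
by exists [set S]; [move=> _ ->; exact: finI_from1 | rewrite bigcup_set1].
Qed.

Lemma mrowka_nbhsP p U : nbhs p U ->
  exists DA : {fset set (mrowka AA)},
    (forall S, S \in DA -> mrowka_basic AA S /\ S p) /\ \bigcap_(S in [set` DA]) S `<=` U.
Proof.
rewrite nbhsE => -[B [+ Bp] BU]; rewrite /open /= => -[D' D'sub eqB].
rewrite -eqB in Bp BU; case: Bp => V D'V Vp.
have [DA DAsub eqV] := D'sub _ D'V.
exists DA; split=> [S SDA|q DAq]; last by apply: BU; exists V; rewrite // -eqV.
by split; [have := DAsub S SDA; rewrite inE | by move: Vp; rewrite -eqV; apply].
Qed.

Lemma conv_on_basic {T : Type} (x : T -> mrowka AA) (A : set T) p :
  (forall S, mrowka_basic AA S -> S p -> finite_set [set n | A n /\ ~ S (x n)]) ->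
  conv_on x A p.
Proof.
move=> xS U /mrowka_nbhsP[DA [DAp DAU]].
have fin : finite_set (\bigcup_(S in [set` DA]) [set n | A n /\ ~ S (x n)]).
  by apply: bigcup_finite; [exact: finite_fset | move=> S /DAp[]; exact: xS].
apply: sub_finite_set fin => n [An nUx]; apply: contrapT => nDA; apply: nUx.
by apply: DAU => S DAS; apply: contrapT => nSx; apply: nDA; exists S.
Qed.

Lemma mrowka_basic_infty_inv S : mrowka_basic AA S -> S None ->
  exists F G, [/\ finite_set F, finite_set G & S = mrowka_nbhs_infty F G].
Proof.
case=> [[n ->] //|[[a [F [_ ->]]] [|[]] //|[F [G [fF [fG ->]]]] _]].
by exists F, G.
Qed.

Lemma pt_set_inj : injective (@pt_set AA).
Proof. by move=> a b [->]. Qed.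

Hypothesis AD : forall A B, AA A -> AA B -> A <> B -> finite_set (A `&` B).

Lemma val_setI_finite a b : a <> b -> finite_set (val a `&` val b).
Proof.
move=> ab; apply: AD; [exact: set_mem (valP a) | exact: set_mem (valP b) |].
by move=> e; apply: ab; exact: val_inj.
Qed.

Lemma mrowka_basic_set_inv S a : mrowka_basic AA S -> S (pt_set a) ->
  exists2 F, finite_set F & mrowka_nbhs_set a F `<=` S.
Proof.
case=> [[n ->] //|[[b [F [fF ->]]]|[F [G [fF [fG ->]]]]]].
  by case=> [/pt_set_inj <-|[]] //; exists F.
case=> [[//|[b nGb /pt_set_inj ba]]|[]] //; subst b.
exists (F `|` (val a `&` \bigcup_(b in G) val b)).
  rewrite finite_setU setI_bigcupr; split=> //; apply: bigcup_finite => // b Gb.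
  by apply: val_setI_finite => ab; apply: nGb; rewrite ab.
move=> _ [->|[n [an nF] <-]]; first by left; right; exists a.
by right; exists n => // -[Fn|[b Gb bn]]; apply: nF; [left | right; split=> //; exists b].
Qed.


Definition basic_separated p q : Prop := exists S S',
  [/\ mrowka_basic AA S, S p, mrowka_basic AA S', S' q & S `&` S' `<=` set0].

Lemma basic_separated_sym p q : basic_separated p q -> basic_separated q p.
Proof. by move=> [S [S' [? ? ? ? dS]]]; exists S', S; split=> //; rewrite setIC. Qed.

Lemma basic_separated_nat n q : q <> pt_nat n -> basic_separated (pt_nat n) q.
Proof.
move=> qn; suff [S [bS Sq Sn]] : exists S, [/\ mrowka_basic AA S, S q & ~ S (pt_nat n)].
  by exists [set pt_nat n], S; split=> //; [exact: mrowka_basic_nat | move=> _ [-> //]].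
case: q qn => [[a|m]|] qn.
- exists (mrowka_nbhs_set a [set n]); split; [exact/mrowka_basic_set/finite_set1 | by left |].
  by case=> [//|[m [_ nm] [mn]]]; apply: nm.
- by exists [set pt_nat m]; split=> //; [exact: mrowka_basic_nat | move/esym].
exists (mrowka_nbhs_infty [set n] set0); split; last 2 first.
+ by left; left.
+ by case=> [[//|[]]|[m nm [mn]]] //; apply: nm; left.
by apply: mrowka_basic_infty; [exact: finite_set1 | exact: finite_set0].
Qed.

Lemma basic_separated_infty a : basic_separated (pt_set a) None.
Proof.
exists (mrowka_nbhs_set a set0), (mrowka_nbhs_infty set0 [set a]); split.
- exact/mrowka_basic_set/finite_set0.
- by left.
- by apply: mrowka_basic_infty; [exact: finite_set0 | exact: finite_set1].
- by left; left.
move=> _ [[->|[n [an _] <-]] [[//|[b nb]]|[m nm]]] //.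
+ by move/pt_set_inj => ba; apply: nb; rewrite ba.
+ by case=> mn; apply: nm; right; exists a; rewrite // mn.
Qed.

Lemma basic_separated_set a b : a <> b -> basic_separated (pt_set a) (pt_set b).
Proof.
move=> ab; exists (mrowka_nbhs_set a (val a `&` val b)), (mrowka_nbhs_set b set0); split.
- exact/mrowka_basic_set/val_setI_finite.
- by left.
- exact/mrowka_basic_set/finite_set0.
- by left.
move=> _ [[->|[k [ak nk] <-]] [ba|[k' [bk' _] [kk']]]] //.
  by apply: ab; apply: pt_set_inj; exact: ba.
by apply: nk; split; rewrite // -kk'.
Qed.

Lemma mrowka_hausdorff : hausdorff_space (mrowka AA).
Proof.
move=> p q pq; apply: contrapT => npq.
have [S [S' [bS Sp bS' S'q dS]]] : basic_separated p q.
  case: p q pq npq => [[a|n]|] [[b|m]|] _ npq; try exact: basic_separated_nat (nesym npq).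
  - by apply: basic_separated_set => ab; apply: npq; rewrite ab.
  - by apply: basic_separated_sym; exact: basic_separated_nat.
  - exact: basic_separated_infty.
  - exact/basic_separated_sym/basic_separated_infty.
  - by apply: basic_separated_sym; exact: basic_separated_nat.
  - by [].
by have [z Sz] := pq S S' (nbhs_mrowka_basic bS Sp) (nbhs_mrowka_basic bS' S'q); apply: dS Sz.
Qed.

Lemma conv_on_infty {T : Type} (x : T -> mrowka AA) (A : set T) :
  (forall n, A n -> exists a, x n = pt_set a) ->
  (forall a, finite_set [set n | A n /\ x n = pt_set a]) -> conv_on x A None.
Proof.
move=> xA fibA; apply: conv_on_basic => S bS SN.
have [F [G [_ fG ->]]] := mrowka_basic_infty_inv bS SN.
apply: sub_finite_set (bigcup_finite fG (fun a _ => fibA a)) => n [An nSx].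
have [a xa] := xA n An; exists a; last by split.
by apply: contrapT => Ga; apply: nSx; rewrite xa; left; right; exists a.
Qed.

Lemma conv_on_set {T : Type} (x : T -> mrowka AA) (A : set T) a :
  (forall n, A n -> exists2 m, x n = pt_nat m & val a m) ->
  (forall m, finite_set [set n | A n /\ x n = pt_nat m]) -> conv_on x A (pt_set a).
Proof.
move=> xA fibA; apply: conv_on_basic => S bS Sa.
have [F fF FS] := mrowka_basic_set_inv bS Sa.
apply: sub_finite_set (bigcup_finite fF (fun m _ => fibA m)) => n [An nSx].
have [m xm am] := xA n An; exists m; last by split.
by apply: contrapT => Fm; apply: nSx; rewrite xm; apply: FS; right; exists m.
Qed.

End Mrowka.

Lemma finite_set_inj {T U : Type} (f : T -> U) (A : set T) (B : set U) :
  {in A &, injective f} -> f @` A `<=` B -> finite_set B -> finite_set A.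
Proof. by move=> finj fAB /(sub_finite_set fAB); rewrite (eq_finite_set (inj_card_eq finj)). Qed.

Lemma fibres_bij_prod {Y : Type} (C : set nat) (pi : nat -> Y) :
  infinite_set (pi @` C) ->
  (forall y, (pi @` C) y -> infinite_set (C `&` pi @^-1` [set y])) ->
  exists (f : nat -> nat * nat) (idx : Y -> nat),
    [/\ set_bij C setT f, forall n, C n -> (f n).1 = idx (pi n) & {in pi @` C &, injective idx}].
Proof.
move=> infK inf_fib.
have cK : countable (pi @` C) := card_le_trans (card_image_le pi C) (countableP C).
have /card_set_bijP[idx [_ idxinj idxsurj]] := eq_card_nat cK infK.
have fib_bij y : exists b : nat -> nat,
    (pi @` C) y -> set_bij (C `&` pi @^-1` [set y]) [set: nat] b.
  have [Ky|] := pselect ((pi @` C) y); last by exists id.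
  by have /card_set_bijP[b bb] := eq_card_nat (countableP _) (inf_fib y Ky); exists b.
have [b bP] := choice fib_bij.
exists (fun n => (idx (pi n), b (pi n) n)), idx; split=> //; split=> //.
- move=> n m /set_mem Cn /set_mem Cm [/idxinj e1 e2].
  have Kn : (pi @` C) (pi n) by exists n.
  have Km : (pi @` C) (pi m) by exists m.
  have pnm : pi n = pi m := e1 (mem_set Kn) (mem_set Km).
  have [_ binj _] := bP _ Kn; apply: binj; rewrite ?inE; last by rewrite e2 pnm.
    by split.
  by split=> //; rewrite /= -pnm.
- move=> [k l] _; have [y Ky <-] := idxsurj k I.
  have [_ _ bsurj] := bP _ Ky; have [n [Cn /= pn] <-] := bsurj l I.
  by exists n => //; rewrite pn.
Qed.

Section HereditaryWeakP.
Variable I0 : set (set nat).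
Hypothesis I0_ideal : nat_ideal I0.

Lemma pullback_Fin2_small {Y : choiceType} (C : set nat) (pi : nat -> Y)
    (f : nat -> nat * nat) (idx : Y -> nat) :
  {in C &, injective f} -> (forall n, C n -> (f n).1 = idx (pi n)) ->
  {in pi @` C &, injective idx} -> (forall y, I0 (C `&` pi @^-1` [set y])) ->
  (forall D, D `<=` C -> (forall y, finite_set (D `&` pi @^-1` [set y])) -> I0 D) ->
  forall B, Fin2 B -> I0 (C `&` f @^-1` B).
Proof.
move=> finj fidx idxinj fibI small B; rewrite /Fin2 /= => finB.
pose KB := [set k | infinite_set [set l | B (k, l)]].
have finKB : finite_set (pi @` C `&` idx @^-1` KB).
  by apply: finite_set_inj finB => [y y' /set_mem[Ky _] /set_mem[Ky' _]|_ [y [_ KBy] <-]];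
    [apply: idxinj; rewrite inE | ].
pose S := C `&` f @^-1` B `&` [set n | ~ KB (idx (pi n))].
apply: (nat_idealSU I0_ideal)
  (nat_ideal_bigcup I0_ideal finKB (fun y _ => fibI y)) (small S _ _) _.
- by move=> n [[Cn _] _].
- move=> y; have [KBy|nKBy] := pselect (KB (idx y)).
    rewrite (_ : _ `&` _ = set0) ?finite_set0 //.
    apply/seteqP; split=> // n [[_ nKB] piy].
    by have e : pi n = y := piy; apply: nKB; rewrite /= e.
  apply: (@finite_set_inj _ _ f _ ([set idx y] `*` [set l | B (idx y, l)])).
  - by move=> n m /set_mem[[[Cn _] _] _] /set_mem[[[Cm _] _] _]; apply: finj; rewrite inE.
  - move=> _ [n [[[Cn Bn] _] piy] <-]; rewrite /= in piy.
    have f1 : (f n).1 = idx y by rewrite fidx // piy.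
    rewrite /setX /=; split=> //; rewrite -f1 -surjective_pairing; exact: Bn.
  - by apply: finite_setX; [exact: finite_set1 | exact: contrapT].
- move=> n [Cn Bn]; have [KBn|nKBn] := pselect (KB (idx (pi n))); last by right.
  by left; exists (pi n); [split=> //; exists n | split].
Qed.

(* Fin2 is not below the restriction of I0 to any I0-positive C (the
   hereditary weak P-property, stated for ideals on nat). *)
Hypothesis Fin2_not_below : forall C, ~ I0 C ->
  ~ exists f : nat -> nat * nat, set_bij C setT f /\ forall B, Fin2 B -> I0 (C `&` f @^-1` B).

Lemma finite_fibres_refinement {Y : choiceType} (C : set nat) (pi : nat -> Y) :
  ~ I0 C -> (forall y, I0 (C `&` pi @^-1` [set y])) ->
  exists D, [/\ D `<=` C, ~ I0 D & forall y, finite_set (D `&` pi @^-1` [set y])].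
Proof.
(* Otherwise, after discarding the finite fibres, a bijection onto nat * nat
   sending fibres to columns would pull Fin2 back into I0. *)
move=> nIC fibI; apply: contrapT => noD.
have small D : D `<=` C -> (forall y, finite_set (D `&` pi @^-1` [set y])) -> I0 D.
  by move=> DC fD; apply: contrapT => nID; apply: noD; exists D.
pose big := [set y | infinite_set (C `&` pi @^-1` [set y])].
pose C' := C `&` pi @^-1` big.
have nIC' : ~ I0 C'.
  move=> IC'; apply: nIC; apply: (nat_idealSU I0_ideal) IC' _ _.
    apply: (small (C `&` pi @^-1` (~` big))) => [n []//|y].
    have [By|nBy] := pselect (big y).
      rewrite (_ : _ `&` _ = set0) ?finite_set0 //; apply/seteqP; split=> // n [[_ nB] piy].
      by have e : pi n = y := piy; apply: nB; rewrite /= e.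
    by apply: sub_finite_set (contrapT nBy) => n [[Cn _] piy].
  by move=> n Cn; have [|] := pselect (big (pi n)); [left | right].
have C'fib y : big y -> C' `&` pi @^-1` [set y] = C `&` pi @^-1` [set y].
  move=> By; apply/seteqP; split=> [n [[Cn _] piy] | n [Cn piy]]; split=> //.
  by have e : pi n = y := piy; split; rewrite //= e.
have infK : infinite_set (pi @` C').
  move=> finK; apply: nIC'.
  apply: (nat_idealS I0_ideal) (nat_ideal_bigcup I0_ideal finK (fun y _ => fibI y)) _.
  by move=> n [Cn Bn]; exists (pi n) => //; exists n.
have [f [idx [fbij fidx idxinj]]] : exists (f : nat -> nat * nat) (idx : Y -> nat),
    [/\ set_bij C' setT f, forall n, C' n -> (f n).1 = idx (pi n) & {in pi @` C' &, injective idx}].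
  by apply: fibres_bij_prod => // _ [n [_ Bn] <-]; rewrite C'fib.
have [_ finj _] := fbij; apply: (Fin2_not_below nIC'); exists f; split=> //.
apply: pullback_Fin2_small finj fidx idxinj _ _ => [y|D DC' finD].
  by apply: (nat_idealS I0_ideal) (fibI y) _ => n [[Cn _] piy].
by apply: (small D) finD => n /DC'[].
Qed.

End HereditaryWeakP.

Section WellOrder.
Variables (T : eqType) (R : rel T).
Hypothesis wo : well_order R.

Let wo_chainT : wo_chain R predT. Proof. exact: withinW. Qed.

Lemma wo_total : total R.
Proof. by move=> x y; apply: (wo_chainW wo_chainT). Qed.

Lemma wo_antisym : antisymmetric R.
Proof. by move=> x y; apply: (wo_chain_antisymmetric wo_chainT). Qed.

Lemma wo_min (S : set T) : S !=set0 -> exists2 z, S z & forall x, S x -> R z x.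
Proof.
move=> [x Sx]; have [|z [[Sz zS] _]] := wo (A := [pred y | `[< S y >]]).
  by exists x; apply/asboolP.
by exists z => [|y Sy]; [exact/asboolP | apply: zS; exact/asboolP].
Qed.

Lemma wo_trans : transitive R.
Proof.
move=> y x z Rxy Ryz.
have [m xyz_m mmin] := @wo_min [set w | w = x \/ w = y \/ w = z] (ex_intro _ x (or_introl erefl)).
case: xyz_m => [|[|]] em; subst m.
- by apply: mmin; right; right.
- have -> : x = y by apply: wo_antisym; rewrite Rxy mmin //; left.
  exact: Ryz.
- have <- : y = z by apply: wo_antisym; rewrite Ryz mmin //; right; left.
  exact: Rxy.
Qed.

Definition wo_lt x y := R x y /\ x <> y.

Lemma wo_lt_wf : well_founded wo_lt.
Proof.
move=> x; apply: contrapT => nAx.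
have [z nAz zmin] := @wo_min [set y | ~ Acc wo_lt y] (ex_intro _ x nAx).
apply: nAz; constructor => y [Ryz yz]; apply: contrapT => nAy.
by apply: yz; apply: wo_antisym; rewrite Ryz zmin.
Qed.

Lemma wo_lt_trans x y z : wo_lt x y -> wo_lt y z -> wo_lt x z.
Proof.
move=> [Rxy xy] [Ryz yz]; split; first exact: wo_trans Rxy Ryz.
by move=> exz; subst z; apply: xy; apply: wo_antisym; rewrite Rxy Ryz.
Qed.

Lemma wo_lt_total x y : x <> y -> wo_lt x y \/ wo_lt y x.
Proof. by move=> xy; case/orP: (wo_total x y) => ?; [left | right]; split=> // /esym. Qed.

End WellOrder.

Lemma wf_recursion {X Y : Type} (lt : X -> X -> Prop) (step : set Y -> X -> Y) :
  well_founded lt -> exists p : X -> Y, forall t, p t = step (p @` [set s | lt s t]) t.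
Proof.
move=> wf; pose F t (rec : forall s, lt s t -> Y) :=
  step [set y | exists s (h : lt s t), y = rec s h] t.
exists (Fix wf (fun _ => Y) F) => t; rewrite Fix_eq => [|x f g fg]; last first.
  by congr step; apply/seteqP; split=> y [s [h ->]]; exists s, h; rewrite fg.
congr step; apply/seteqP; split=> [y [s [h ->]]|_ [s h <-]]; first by exists s.
by exists s, h.
Qed.

Lemma CH_recursion (Good : set (set nat) -> set nat -> set nat -> Prop) : CH ->
  (forall F S, countable F -> exists p, Good F S p) ->
  exists (W : set (set nat)) (lt : set nat -> set nat -> Prop) (p code : set nat -> set nat),
    [/\ forall s t, W s -> W t -> s <> t -> lt s t \/ lt t s,
        forall S, exists2 t, W t & code t = S &
        forall t, W t -> Good (p @` [set s | W s /\ lt s t]) (code t) (p t)].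
Proof.
move=> ch good_ex; have [R wo] := well_ordering_principle (set nat).
pose lt := wo_lt R; pose W := [set t | countable [set s | lt s t]].
have W_lt s t : lt s t -> W t -> W s.
  by move=> st; apply/sub_countable/subset_card_le => u us; exact: wo_lt_trans us st.
have [code code_surj] : exists code : set nat -> set nat, forall S, exists2 t, W t & code t = S.
  (* Either every initial segment is countable, or CH makes the segment below
     the least uncountable one equinumerous with [set nat]. *)
  have [allW|/existsNP[t0 nWt0]] := pselect (forall t, W t); first by exists id => S; exists S.
  have [s0 nWs0 s0min] := @wo_min _ _ wo [set t | ~ W t] (ex_intro _ t0 nWt0).
  have segW : [set u | lt u s0] `<=` W.
    move=> u [Rus0 us0]; apply: contrapT => nWu.
    by apply: us0; apply: wo_antisym wo _ _ _; rewrite Rus0 s0min.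
  case: (ch [set u | lt u s0]) => [//|/card_set_bijP[f [_ _ fsurj]]].
  by exists f => S; have [t ts0 <-] := fsurj S I; exists t => //; exact: segW.
have [p peq] := wf_recursion (fun F t => xget set0 (Good F (code t))) (wo_lt_wf wo).
exists W, lt, p, code; split=> [s t _ _|//|t Wt]; first exact: wo_lt_total.
have -> : [set s | W s /\ lt s t] = [set s | lt s t].
  by apply/seteqP; split=> [s []//|s st]; split=> //; exact: W_lt st Wt.
by rewrite peq; apply: xgetPex; apply: good_ex; exact: card_le_trans (card_image_le _ _) Wt.
Qed.

Lemma first_hit (E : nat -> set nat) : exists kap : nat -> nat, forall n,
  [/\ kap n = 0 -> forall k, ~ E k n, forall j, kap n = j.+1 -> E j n &
      forall k, E k n -> kap n <= k.+1].
Proof.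
suff /choice[kap kapP] : forall n, exists m,
    [/\ m = 0 -> forall k, ~ E k n, forall j, m = j.+1 -> E j n & forall k, E k n -> m <= k.+1].
  by exists kap.
move=> n; have [hit|miss] := pselect (exists k, `[< E k n >]); last first.
  by exists 0; split=> // _ k Ekn; apply: miss; exists k; exact/asboolP.
case: (ex_minnP hit) => k /asboolP Ekn kmin.
by exists k.+1; split=> // [j [<-] //|k' /asboolP/kmin]; rewrite ltnS.
Qed.

Lemma maximal_family_infinite (K AA : set (set nat)) : nat_ideal K -> ~ K setT ->
  (forall a, AA a -> K a) -> (forall E, ~ K E -> exists2 a, AA a & infinite_set (E `&` a)) ->
  infinite_set AA.
Proof.
move=> K_ideal KT AAK AAmax finAA.
have KU : K (\bigcup_(a in AA) a) := nat_ideal_bigcup K_ideal finAA AAK.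
have [|a AAa] := AAmax (~` \bigcup_(a in AA) a).
  by move=> KC; apply: KT; rewrite -(setvU (\bigcup_(a in AA) a)); exact: nat_idealU.
apply; rewrite (_ : _ `&` _ = set0) ?finite_set0 //.
by apply/seteqP; split=> // n [+ an]; apply; exists a.
Qed.

Definition Task := (set nat + (nat -> nat))%type.

(* Coding tasks by subsets of nat lets the CH-enumeration of [set nat] list every task. *)
Definition task_code (t : Task) : set nat :=
  match t with
  | inl E => 0 |` [set n.+1 | n in E]
  | inr g => [set (choice.pickle (k, g k)).+1 | k in setT]
  end.

Lemma task_code_inj : injective task_code.
Proof.
case=> [E|g] [E'|g'] //= e.
- congr inl; apply/seteqP; split=> n En.
    by have [//|[m E'm [<-]]] : (0 |` [set n.+1 | n in E']) n.+1 by rewrite -e; right; exists n.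
  by have [//|[m Em [<-]]] : (0 |` [set n.+1 | n in E]) n.+1 by rewrite e; right; exists n.
- by have [k _ /eqP] : [set (choice.pickle (k, g' k)).+1 | k in setT] 0 by rewrite -e; left.
- by have [k _ /eqP] : [set (choice.pickle (k, g k)).+1 | k in setT] 0 by rewrite e; left.
- congr inr; apply: funext => k.
  have [k' _ [/(pcan_inj choice.pickleK_inv) [-> ->]]] :
    [set (choice.pickle (k, g' k)).+1 | k in setT] (choice.pickle (k, g k)).+1.
    by rewrite -e; exists k.
  by [].
Qed.

Section ADFamily.
Variables I0 J0 : set (set nat).
Hypotheses (I0_ideal : nat_ideal I0) (J0_ideal : nat_ideal J0) (J0_proper : ~ J0 setT).
Hypothesis I0_weakP : forall C (pi : nat -> nat), ~ I0 C ->
  (forall k, I0 (C `&` pi @^-1` [set k])) ->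
  exists D, [/\ D `<=` C, ~ I0 D & forall k, finite_set (D `&` pi @^-1` [set k])].
Hypothesis J0_not_katetov : forall g : nat -> nat, exists2 b, J0 b & ~ I0 (g @^-1` b).

Lemma J0_tall E : ~ J0 E -> exists b, [/\ b `<=` E, J0 b & infinite_set b].
Proof.
move=> nJE; have /infiniteP/pcard_leP/injfunPex[g gE ginj] : infinite_set E.
  by move=> finE; apply: nJE; exact: nat_ideal_finite.
have [b Jb nIb] := J0_not_katetov g; exists (b `&` E); split=> //.
  exact: (nat_idealS J0_ideal) Jb _.
move=> finb; apply: nIb; apply: nat_ideal_finite => //.
have : finite_set (g @^-1` (b `&` E)).
  by apply: finite_preimage finb => x y _ _ /ginj; apply; rewrite inE.
by apply: sub_finite_set => n bgn; split=> //; exact: gE.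
Qed.

Lemma almost_disjoint_refinement (C : set nat) (F : set (set nat)) : countable F -> ~ I0 C ->
  (forall a, F a -> I0 (C `&` a)) ->
  exists D, [/\ D `<=` C, ~ I0 D & forall a, F a -> finite_set (D `&` a)].
Proof.
move=> cF nIC CFI; have [e esurj] : exists e : nat -> set nat, set_surj setT F e.
  exact/pcard_surjP.
pose R := C `&` [set n | forall a, F a -> ~ a n].
have [nIR|/contrapT IR] := pselect (~ I0 R).
  exists R; split=> // [n []//|a Fa]; rewrite (_ : _ `&` _ = set0) ?finite_set0 //.
  by apply/seteqP; split=> // n [[_ /(_ a Fa)]].
(* [kap n] is one plus the index of the first enumerated member of F
   containing n, and 0 if there is none; a D with finite [kap]-fibres meets
   each member of F in a finite set. *)
have [kap kapP] := first_hit (fun k => [set n | F (e k) /\ e k n]).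
have fibI j : I0 (C `&` kap @^-1` [set j]).
  case: j => [|j].
    apply: (nat_idealS I0_ideal) IR _ => n [Cn /= kn]; split=> // a Fa an.
    have [k _ eka] := esurj a Fa; have [/(_ kn k) + _ _] := kapP n.
    by apply; rewrite eka.
  have [Fej|nFej] := pselect (F (e j)); last first.
    apply: (nat_idealS I0_ideal) (nat_ideal0 I0_ideal) _ => n [_ /= kn].
    by have [_ /(_ j kn)[] //] := kapP n.
  apply: (nat_idealS I0_ideal) (CFI _ Fej) _ => n [Cn /= kn]; split=> //.
  by have [_ /(_ j kn)[] //] := kapP n.
have [D [DC nID finD]] := I0_weakP nIC fibI.
exists D; split=> // a Fa; have [k _ eka] := esurj a Fa.
apply: sub_finite_set (bigcup_finite (finite_II k.+2) (fun j _ => finD j)) => n [Dn an].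
have [_ _ /(_ k) kle] := kapP n; exists (kap n) => //=.
by rewrite ltnS; apply: kle; rewrite eka.
Qed.

Definition task_met (F : set (set nat)) (t : Task) : Prop :=
  match t with
  | inl E => J0 E \/ exists2 a, F a & infinite_set (E `&` a)
  | inr g => (exists k, ~ I0 (g @^-1` [set k])) \/
      exists2 a, F a & exists D, [/\ ~ I0 D, g @` D `<=` a &
        forall k, finite_set (D `&` g @^-1` [set k])]
  end.

Definition good_ext (F : set (set nat)) (t : Task) (p : set nat) : Prop :=
  [/\ J0 p, forall a, F a -> finite_set (p `&` a) & task_met (F `|` [set p]) t].

Lemma good_ext0 F t : task_met F t -> good_ext F t set0.
Proof.
move=> Ft; split=> [|a _|]; first exact: nat_ideal0.
  by rewrite set0I; exact: finite_set0.
by case: t Ft => [E|g] [|[a Fa aP]]; by [left | right; exists a => //; left].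
Qed.

Lemma good_ext_set F E : exists p, good_ext F (inl E) p.
Proof.
have [met|unmet] := pselect (task_met F (inl E)); first by exists set0; exact: good_ext0.
have [nJE finEF] : ~ J0 E /\ forall a, F a -> finite_set (E `&` a).
  by split=> [JE|a Fa]; [|apply: contrapT => infEa]; apply: unmet; [left | right; exists a].
have [b [bE Jb infb]] := J0_tall nJE; exists b; split=> // [a Fa|].
  by apply: sub_finite_set (finEF a Fa) => n [bn an]; split=> //; exact: bE.
by right; exists b; [right | rewrite setIidr].
Qed.

Lemma good_ext_fun F g : countable F -> exists p, good_ext F (inr g) p.
Proof.
move=> cF; have [met|unmet] := pselect (task_met F (inr g)); first by exists set0; exact: good_ext0.
have fibI k : I0 (g @^-1` [set k]) by apply: contrapT => nI; apply: unmet; left; exists k.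
(* Pull some b in J0 back along g to an I0-positive set, shrink it to finite
   g-fibres and to almost disjointness from the g-preimages of members of F;
   the new set is the part of b hit by the result. *)
have [b Jb nIgb] := J0_not_katetov g.
have [Q [Qgb nIQ finQ]] := I0_weakP nIgb (fun k => nat_idealS I0_ideal (fibI k) (@subIsetr _ _ _)).
have QFI a : F a -> I0 (Q `&` g @^-1` a).
  move=> Fa; apply: contrapT => nI; apply: unmet; right; exists a => //.
  exists (Q `&` g @^-1` a); split=> // [_ [n [_ an] <-] //|k].
  by apply: sub_finite_set (finQ k) => n [[Qn _] gn].
have [D [DQ nID finD]] : exists D, [/\ D `<=` Q, ~ I0 D &
    forall a, (preimage g @` F) a -> finite_set (D `&` a)].
  apply: almost_disjoint_refinement nIQ _; first exact: card_le_trans (card_image_le _ _) cF.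
  by move=> _ [a Fa <-]; exact: QFI.
exists (b `&` g @` D); split.
- exact: (nat_idealS J0_ideal) Jb (@subIsetl _ _ _).
- move=> a Fa; apply: sub_finite_set (finite_image g (finD _ (ex_intro2 _ _ a Fa erefl))).
  by move=> _ [[_ [n Dn <-]] gna]; exists n.
right; exists (b `&` g @` D); [by right | exists D; split=> // [_ [n Dn <-]|k]].
  by split; [exact: Qgb (DQ _ Dn) | exists n].
by apply: sub_finite_set (finQ k) => n [Dn gn]; split=> //; exact: DQ.
Qed.

Lemma good_ext_exists F t : countable F -> exists p, good_ext F t p.
Proof. by case: t => [E|g] cF; [exact: good_ext_set | exact: good_ext_fun]. Qed.

Theorem ad_family_exists : CH -> exists AA : set (set nat),
  [/\ almost_disjoint_family AA, forall a, AA a -> J0 a,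
      forall E, ~ J0 E -> exists2 a, AA a & infinite_set (E `&` a) &
      forall g : nat -> nat, (forall k, I0 (g @^-1` [set k])) ->
        exists2 a, AA a & exists D, [/\ ~ I0 D, g @` D `<=` a &
          forall k, finite_set (D `&` g @^-1` [set k])]].
Proof.
move=> ch; have [dec decK] : exists dec : set nat -> Task, cancel task_code dec.
  exists ('pinv_(fun _ => inl set0) setT task_code) => t.
  by rewrite pinvKV ?inE //; exact: in2W task_code_inj.
have [W [lt [p [code [lt_total code_surj pgood]]]]] :=
  @CH_recursion (fun F S => good_ext F (dec S)) ch (fun F S => good_ext_exists (dec S)).
pose before t := p @` [set s | W s /\ lt s t].
have task t0 : exists2 t, W t & good_ext (before t) t0 (p t).
  have [t Wt ct] := code_surj (task_code t0).
  by exists t => //; rewrite -[t0]decK -ct; exact: pgood.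
pose AA := [set a | infinite_set a /\ exists2 t, W t & p t = a].
have AA_stage t a : W t -> (before t `|` [set p t]) a -> infinite_set a -> AA a.
  by move=> Wt [[s [Ws _] <-]|->] ia; split=> //; [exists s | exists t].
have AAJ a : AA a -> J0 a by case=> _ [t Wt <-]; have [] := pgood t Wt.
have AAmax E : ~ J0 E -> exists2 a, AA a & infinite_set (E `&` a).
  move=> nJE; have [t Wt [_ _ [//|[a Fa infEa]]]] := task (inl E).
  by exists a => //; apply: AA_stage Fa _ => // /(finite_setIr E).
exists AA; split=> //; first split.
- exact: maximal_family_infinite J0_ideal J0_proper AAJ AAmax.
- by move=> a [].
- move=> _ _ [_ [s Ws <-]] [_ [t Wt <-]] pst.
  have [lst|lts] := lt_total s t Ws Wt (fun st => pst (congr1 p st)).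
    by have [_ fin _] := pgood t Wt; rewrite setIC; apply: fin; exists s.
  by have [_ fin _] := pgood s Ws; apply: fin; exists t.
move=> g fibI; have [t Wt [_ _ [[k /(_ (fibI k))]//|[a Fa [D [nID gDa finD]]]]]] := task (inr g).
exists a; last by exists D.
apply: AA_stage Fa _ => // fina; apply: nID; apply: (nat_ideal_finite I0_ideal).
apply: sub_finite_set (bigcup_finite fina (fun k _ => finD k)) => n Dn.
by exists (g n); [apply: gDa; exists n | split].
Qed.

End ADFamily.

Section MrowkaFinBW.
Variables (AA I0 : set (set nat)).
Hypothesis I0_ideal : nat_ideal I0.
Hypothesis I0_weakP : forall (C : set nat) (pi : nat -> mrowka AA), ~ I0 C ->
  (forall y, I0 (C `&` pi @^-1` [set y])) ->
  exists D, [/\ D `<=` C, ~ I0 D & forall y, finite_set (D `&` pi @^-1` [set y])].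
Hypothesis AD : forall A B, AA A -> AA B -> A <> B -> finite_set (A `&` B).
Hypothesis AA_catches : forall g : nat -> nat, (forall k, I0 (g @^-1` [set k])) ->
  exists2 a, AA a & exists D, [/\ ~ I0 D, g @` D `<=` a &
    forall k, finite_set (D `&` g @^-1` [set k])].

Section Sequence.
Variable x : nat -> mrowka AA.
Hypothesis x_fibres : forall p, I0 (x @^-1` [set p]).

Let hits_AA := [set n | exists a, x n = pt_set a].

Lemma conv_subseq_infty : ~ I0 hits_AA -> exists A, ~ I0 A /\ exists p, conv_on x A p.
Proof.
move=> nI_hits; have [D [Dhits nID finD]] :=
  I0_weakP nI_hits (fun p => nat_idealS I0_ideal (x_fibres p) (@subIsetr _ _ _)).
exists D; split=> //; exists None; apply: conv_on_infty => [n /Dhits //|a].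
by apply: sub_finite_set (finD (pt_set a)) => n [].
Qed.

Lemma conv_subseq_set : I0 hits_AA -> exists A, ~ I0 A /\ exists p, conv_on x A p.
Proof.
move=> I_hits; pose g n := if x n is Some (inr m) then m else 0.
have x_cover n : [\/ x n = pt_nat (g n), hits_AA n | x n = None].
  rewrite /g /hits_AA /=; case: (x n) => [[a|m]|]; last exact: Or33.
    by apply: Or32; exists a.
  exact: Or31.
have fibg k : I0 (g @^-1` [set k]).
  apply: (nat_idealSU I0_ideal)
    (nat_idealU I0_ideal (x_fibres (pt_nat k)) I_hits) (x_fibres None) _.
  by move=> n /= gn; case: (x_cover n) => [|?|?]; [rewrite gn; left; left | left; right | right].
have [a AAa [D [nID gDa finD]]] := AA_catches fibg.
pose A := D `&` [set n | x n = pt_nat (g n)].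
exists A; split.
  move=> IA; apply: nID.
  apply: (nat_idealSU I0_ideal) (nat_idealU I0_ideal IA I_hits) (x_fibres None) _.
  by move=> n Dn; case: (x_cover n) => [?|?|?]; [left; left | left; right | right].
exists (pt_set (SigSub (mem_set AAa))); apply: (conv_on_set AD) => [n [Dn xn]|m].
  by exists (g n) => //; apply: gDa; exists n.
by apply: sub_finite_set (finD m) => n [[Dn xn] /esym]; rewrite xn => -[].
Qed.

End Sequence.

Lemma mrowka_conv_subseq (x : nat -> mrowka AA) : exists A, ~ I0 A /\ exists p, conv_on x A p.
Proof.
have [[p nIp]|/forallNP fibI] := pselect (exists p, ~ I0 (x @^-1` [set p])).
  by exists (x @^-1` [set p]); split=> //; exists p; exact: conv_on_cst.
have x_fibres p : I0 (x @^-1` [set p]) by apply: contrapT; exact: fibI.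
have [I_hits|nI_hits] := pselect (I0 [set n | exists a, x n = pt_set a]).
  exact: conv_subseq_set.
exact: conv_subseq_infty.
Qed.

End MrowkaFinBW.

Lemma conv_pt_nat_ideal (AA K : set (set nat)) : nat_ideal K ->
  (forall a, AA a -> K a) -> (forall E, ~ K E -> exists2 a, AA a & infinite_set (E `&` a)) ->
  forall A p, conv_on (@pt_nat AA) A p -> K A.
Proof.
move=> K_ideal AAK AAmax A [[a|m]|] Ap.
- have fin := Ap _ (nbhs_mrowka_basic (mrowka_basic_set a (finite_set0 _)) (or_introl erefl)).
  apply: (nat_idealSU K_ideal) (nat_ideal_finite K_ideal fin) (AAK _ (set_mem (valP a))) _.
  move=> n An; have [|nU] := pselect (mrowka_nbhs_set a set0 (pt_nat n)); last by left.
  by case=> [//|[k [ak _] [<-]]]; right.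
- have fin := Ap _ (nbhs_mrowka_basic (mrowka_basic_nat AA m) erefl).
  apply: (nat_idealSU K_ideal) (nat_ideal_finite K_ideal fin)
    (nat_ideal_finite K_ideal (finite_set1 m)) _.
  by move=> n An; have [[->]|nU] := pselect ([set pt_nat m] (@pt_nat AA n)); [right|left].
apply: contrapT => /AAmax[a AAa]; apply; pose a' : AA := SigSub (mem_set AAa).
have bU := mrowka_basic_infty (finite_set0 nat) (finite_set1 a').
apply: sub_finite_set (Ap _ (nbhs_mrowka_basic bU (or_introl (or_introl erefl)))).
move=> n [An an]; split=> // -[[//|[b _ //]]|[k nk [kn]]].
by apply: nk; right; exists a'; rewrite // kn.
Qed.

Lemma FinBW_subideal {T : Type} (I I' : set (set T)) (X : topologicalType) :
  supp I = supp I' -> I `<=` I' -> FinBW I' X -> FinBW I X.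
Proof.
move=> suppI II' [hX I'BW]; split=> // x; have [A [AX nIA conv]] := I'BW x.
by exists A; split=> //; [rewrite suppI | move/II'].
Qed.

Lemma supp_enum {T : Type} (K : set (set T)) : is_ideal K ->
  exists (h : nat -> T) (fi : T -> nat),
    [/\ forall n, supp K (h n), forall n, fi (h n) = n & forall t, supp K t -> h (fi t) = t].
Proof.
case=> cX iX _ _ _; have /card_set_bijP[fi [_ fiinj fisurj]] := eq_card_nat cX iX.
have /choice[h hP] : forall n, exists t, supp K t /\ fi t = n.
  by move=> n; have [t Xt <-] := fisurj n I; exists t.
exists h, fi; split=> [n|n|t Xt]; [by case: (hP n) | by case: (hP n) |].
by case: (hP (fi t)) => Xh fih; apply: fiinj; rewrite ?inE.
Qed.

Lemma supp_Fin2 : supp Fin2 = setT.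
Proof.
apply/seteqP; split=> // -[n m] _; exists [set (n, m)] => //.
rewrite /Fin2 /= (_ : [set _ | _] = set0) ?finite_set0 //; apply/seteqP; split=> // k; apply.
by apply: sub_finite_set (finite_set1 m) => l [].
Qed.

Lemma supp_restr {T : Type} (K : set (set T)) (A : set T) : is_ideal K ->
  A `<=` supp K -> supp (restr K A) = A.
Proof.
case=> _ _ _ Kfin _ AX; apply/seteqP; split=> [t [_ [B _ <-] []] //|t At].
exists [set t] => //; exists [set t]; last by apply/seteqP; split=> [_ [-> //]|_ ->].
by apply: Kfin; [move=> _ ->; exact: AX | exact: finite_set1].
Qed.

Definition pull_ideal {T : Type} (h : nat -> T) (K : set (set T)) : set (set nat) :=
  [set S | K (h @` S)].

Section PullIdeal.
Variables (T : Type) (K : set (set T)) (h : nat -> T) (fi : T -> nat).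
Hypothesis K_ideal : is_ideal K.
Hypotheses (h_supp : forall n, supp K (h n)) (fihK : forall n, fi (h n) = n)
  (hfiK : forall t, supp K t -> h (fi t) = t).

Lemma pull_ideal_fin : nat_ideal (pull_ideal h K).
Proof.
case: K_ideal => _ _ [Ksub KU] Kfin _; split=> [A B KB AB|A B KA KB|F finF].
- by apply: Ksub KB _; exact: image_subset.
- by rewrite /pull_ideal /= image_setU; exact: KU.
- by apply: Kfin; [move=> _ [n _ <-] | exact: finite_image].
Qed.

Lemma image_preimage_supp (A : set T) : A `<=` supp K -> h @` (h @^-1` A) = A.
Proof.
move=> AX; apply/seteqP; split=> [_ [n An <-] //|t At].
by exists (fi t); rewrite /= hfiK //; exact: AX.
Qed.

Lemma pull_idealT : ~ pull_ideal h K setT.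
Proof.
case: K_ideal => _ _ _ _; rewrite /pull_ideal /= (_ : h @` setT = supp K) //.
by apply/seteqP; split=> [_ [n _ <-] //|t Xt]; exists (fi t); rewrite ?hfiK.
Qed.

Lemma FinBW_pull (X : topologicalType) : hausdorff_space X ->
  (forall x : nat -> X, exists A, ~ pull_ideal h K A /\ exists p, conv_on x A p) -> FinBW K X.
Proof.
move=> hX BW; split=> // x; have [A [nKA [p conv]]] := BW (x \o h).
exists (h @` A); split=> //; first by move=> _ [n _ <-].
exists p => U /conv finU; apply: sub_finite_set (finite_image h finU).
by move=> _ [[n An <-] nU]; exists n.
Qed.

Lemma not_FinBW_pull (X : topologicalType) (x : nat -> X) :
  (forall A p, conv_on x A p -> pull_ideal h K A) -> ~ FinBW K X.
Proof.
move=> conv_pull [_ BW]; have [A [AX nKA [p conv]]] := BW (x \o fi).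
apply: nKA; rewrite -(image_preimage_supp AX); apply: (conv_pull _ p) => U /conv finU.
apply: sub_finite_set (finite_image fi finU) => n [An nU].
by exists (h n); rewrite //= fihK.
Qed.

Lemma pull_Fin2_not_below : hereditary_weakP K -> forall C, ~ pull_ideal h K C ->
  ~ exists f : nat -> nat * nat,
      set_bij C setT f /\ forall B, Fin2 B -> pull_ideal h K (C `&` f @^-1` B).
Proof.
move=> hwp C nKC [f [[_ finj fsurj] fFin2]].
have hCX : h @` C `<=` supp K by move=> _ [n _ <-].
apply: (hwp _ hCX nKC); exists (f \o fi); split=> [|B F2B].
  rewrite supp_restr // supp_Fin2; split=> [//| t t' /set_mem[n Cn <-] /set_mem[n' Cn' <-]|k _] /=.
    by rewrite !fihK => /finj e; congr h; apply: e; rewrite inE.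
  by have [n Cn <-] := fsurj k I; exists (h n); [exists n | rewrite /= fihK].
rewrite supp_restr //; exists (h @` (C `&` f @^-1` B)); first exact: fFin2.
apply/seteqP; split=> [_ [[n [Cn Bn] <-] _]|_ [[n Cn <-] Bn]]; split;
  [by exists n | by rewrite /= fihK | | by exists n].
by exists n => //; split=> //; rewrite /= fihK in Bn.
Qed.

End PullIdeal.

Lemma pull_not_katetov {T U : Type} (I : set (set T)) (J : set (set U))
    (hI : nat -> T) (fI : T -> nat) (hJ : nat -> U) :
  is_ideal I -> is_ideal J -> (forall t, supp I t -> hI (fI t) = t) -> (forall n, supp J (hJ n)) ->
  ~ katetov_le J I ->
  forall g : nat -> nat, exists2 b, pull_ideal hJ J b & ~ pull_ideal hI I (g @^-1` b).
Proof.
case=> _ _ [Isub _] _ _ [_ _ [Jsub _] _ _] hfI hJY nkat g; apply: contrapT => nex; apply: nkat.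
exists (hJ \o g \o fI); split=> [t _|B JB]; first exact: hJY.
apply: contrapT => nIB; apply: nex; exists (hJ @^-1` B).
  by apply: Jsub JB _; exact: image_preimage_subset.
move=> Igb; apply: nIB; apply: Isub Igb _ => t [Xt Bt].
by exists (fI t); rewrite ?hfI.
Qed.

Theorem theorem9p3 :
  CH ->
  forall (T U : Type) (I I' : set (set T)) (J : set (set U)),
    is_ideal I -> is_ideal I' -> is_ideal J ->
    supp I = supp I' -> I `<=` I' -> hereditary_weakP I' -> ~ katetov_le J I' ->
    exists AA : set (set nat),
      almost_disjoint_family AA /\
      FinBW I (mrowka AA) /\ ~ FinBW J (mrowka AA).
Proof.
move=> ch T U I I' J _ I'_ideal J_ideal suppII' II' hwp nkat.
have [hI [fI [hIX fIh hfI]]] := supp_enum I'_ideal.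
have [hJ [fJ [hJY fJh hfJ]]] := supp_enum J_ideal.
have I0_ideal := pull_ideal_fin I'_ideal hIX.
have J0_ideal := pull_ideal_fin J_ideal hJY.
have I0_weakP (Y : choiceType) :=
  @finite_fibres_refinement _ I0_ideal (pull_Fin2_not_below I'_ideal hIX fIh hwp) Y.
have [AA [AAad AAJ AAmax AAfun]] :=
  ad_family_exists I0_ideal J0_ideal (pull_idealT J_ideal hJY hfJ)
    (@I0_weakP nat) (pull_not_katetov I'_ideal J_ideal hfI hJY nkat) ch.
have [_ _ AD] := AAad; exists AA; split=> //.
split; last exact: (not_FinBW_pull fJh hfJ (x := pt_nat)) (conv_pt_nat_ideal J0_ideal AAJ AAmax).
apply: FinBW_subideal suppII' II' _; apply: (FinBW_pull hIX (mrowka_hausdorff AD)).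
exact: mrowka_conv_subseq I0_ideal (@I0_weakP _) AD AAfun.
Qed.
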